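(* Let $\pi:P\to M$ be a principal fibre bundle with group $G=P^{-1}P$, in the setting described in the context, and assume $G$ is commutative. Then every horizontal equivariant $G$-valued $k$-form $\theta$ on $P$ can be written as $\theta=\pi^*(\Theta)$ for a unique $G$-valued $k$-form $\Theta$ on $M$, where $(\pi^*\Theta)(u_0,\dots,u_k):=\Theta(\pi(u_0),\dots,\pi(u_k))$.
   Context: Setting: $\Phi$ is a groupoid whose object set contains a set $M$ and an object $*\notin M$; $P$ is the set of arrows of $\Phi$ with domain $*$ and codomain in $M$; $\pi:P\to M$ is the codomain map; $G=P^{-1}P:=\Phi( *,* )$ acts on $P$ from the right by precomposition, freely and transitively on fibres. $M$ and $P$ carry reflexive symmetric neighbour relations $\sim$; an infinitesimal $k$-simplex is a $(k+1)$-tuple of mutual neighbours; $\pi$ preserves $\sim$; for every infinitesimal $k$-simplex $(a_0,\dots,a_k)$ in $M$ and every $x_0$ over $a_0$ there is an infinitesimal $k$-simplex $(x_0,\dots,x_k)$ in $P$ over it; the right action of each $g\in G$ preserves $\sim$. A $G$-valued $k$-form on $P$ (resp. on $M$) is a map assigning an element of $G$ to each infinitesimal $k$-simplex in $P$ (resp. $M$). A $k$-form $\theta$ on $P$ is horizontal if $\theta(u_0,u_1,\dots,u_k)=\theta(u_0,u_1g_1,\dots,u_kg_k)$ for every infinitesimal $k$-simplex $(u_0,\dots,u_k)$ and all $g_1,\dots,g_k\in G$ such that $(u_0,u_1g_1,\dots,u_kg_k)$ is still an infinitesimal $k$-simplex. It is equivariant if $\theta(u_0g,\dots,u_kg)=g^{-1}\theta(u_0,\dots,u_k)g$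 for every infinitesimal $k$-simplex and every $g\in G$. *)

From mathcomp Require Import all_boot.
Set Implicit Arguments. Unset Strict Implicit. Unset Printing Implicit Defensive.

Record groupoid := Groupoid {
  Ob : Type;
  Hom : Ob -> Ob -> Type;
  gcomp : forall a b c, Hom b c -> Hom a b -> Hom a c;
  idg : forall a, Hom a a;
  ginv : forall a b, Hom a b -> Hom b a;
  compA : forall a b c d (h : Hom c d) (g : Hom b c) (f : Hom a b),
    gcomp h (gcomp g f) = gcomp (gcomp h g) f;
  comp1f : forall a b (f : Hom a b), gcomp (idg b) f = f;
  compf1 : forall a b (f : Hom a b), gcomp f (idg a) = f;
  compVf : forall a b (f : Hom a b), gcomp (ginv f) f = idg a;
  compfV : forall a b (f : Hom a b), gcomp f (ginv f) = idg b
}.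
Arguments gcomp {g0 a b c}.
Arguments idg {g0}.
Arguments ginv {g0 a b}.
Arguments Hom : clear implicits.

Section Bundle.
Variables (Phi : groupoid) (M : Type) (obj : M -> Ob Phi) (star : Ob Phi).

(** P = arrows of Phi with domain [star] and codomain in M. *)
Definition Pt := { m : M & Hom Phi star (obj m) }.
Definition proj (u : Pt) : M := projT1 u.
Definition ract (u : Pt) (g : Hom Phi star star) : Pt := existT _ (projT1 u) (gcomp (projT2 u) g).
End Bundle.
Notation Gt star := (Hom _ star star) (only parsing).

Definition isimplex (X : Type) (nb : X -> X -> Prop) (k : nat) (x : 'I_k.+1 -> X) :=
  forall i j : 'I_k.+1, nb (x i) (x j).

Definition refl_sym (X : Type) (nb : X -> X -> Prop) :=
  (forall x, nb x x) /\ (forall x y, nb x y -> nb y x).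

(** G-valued k-forms are maps from (k+1)-tuples to G; only their values on
    infinitesimal k-simplices are meaningful (equalities of forms are always
    stated on simplices). *)
Definition horizontal (Phi : groupoid) (M : Type) (obj : M -> Ob Phi) (star : Ob Phi) (nP : Pt obj star -> Pt obj star -> Prop)
    (k : nat) (theta : ('I_k.+1 -> Pt obj star) -> Gt star) :=
  forall (u : 'I_k.+1 -> Pt obj star) (g : 'I_k.+1 -> Gt star),
    isimplex nP u -> g ord0 = idg star ->
    isimplex nP (fun i => ract (u i) (g i)) ->
    theta u = theta (fun i => ract (u i) (g i)).

Definition equivariant (Phi : groupoid) (M : Type) (obj : M -> Ob Phi) (star : Ob Phi) (nP : Pt obj star -> Pt obj star -> Prop)
    (k : nat) (theta : ('I_k.+1 -> Pt obj star) -> Gt star) :=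
  forall (u : 'I_k.+1 -> Pt obj star) (g : Gt star),
    isimplex nP u ->
    theta (fun i => ract (u i) g) = gcomp (ginv g) (gcomp (theta u) g).

Definition pullback (Phi : groupoid) (M : Type) (obj : M -> Ob Phi) (star : Ob Phi) (k : nat)
    (Theta : ('I_k.+1 -> M) -> Gt star) (u : 'I_k.+1 -> Pt obj star) :=
  Theta (fun i => proj (u i)).

(** Two simplices of P over the same simplex of M differ by a family of
    group elements [h i]. Acting by [h 0] on all vertices does not change
    [theta], by equivariance and commutativity of G; after that step the
    vertex 0 agrees and horizontality absorbs the remaining elements. Hence
    [theta] is constant on the fibres of [proj], so it factors through [proj];
    the factorization is unique because every simplex of M lifts to P. *)
From Stdlib Require Import FunctionalExtensionality IndefiniteDescription Classical.
From Pilot Require Import Defs.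
From mathcomp Require Import all_boot.

Set Implicit Arguments.
Unset Strict Implicit.

Lemma exists_factor_on (X Y Z : Type) (p : X -> Y) (S : X -> Prop)
    (f : X -> Z) (z0 : Z) :
  (forall x y, S x -> S y -> p x = p y -> f x = f y) ->
  exists F : Y -> Z, forall x, S x -> f x = F (p x).
Proof.
move=> f_fibrewise.
have [F f_F] : exists F : Y -> Z,
    forall y x, S x -> p x = y -> f x = F y.
  apply: (functional_choice (fun y z => forall x, S x -> p x = y -> f x = z)) => y.
  case: (classic (exists x, S x /\ p x = y)) => [[x [Sx <-]] | no_x].
    by exists (f x) => x' Sx'; apply: f_fibrewise.
  by exists z0 => x Sx px; case: no_x; exists x.
by exists F => x Sx; apply: f_F.
Qed.

Section Fibres.
Variables (Phi : groupoid) (M : Type) (obj : M -> Ob Phi) (star : Ob Phi).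

Lemma ract_comp (u : Pt obj star) (g h : Gt star) :
  ract (ract u g) h = ract u (gcomp g h).
Proof. by rewrite /ract /= Defs.compA. Qed.

Lemma proj_eq_ract {u v : Pt obj star} :
  proj u = proj v -> exists g, v = ract u g.
Proof.
case: u => m f; case: v => m' f' /= same_m; subst m'.
by exists (gcomp (ginv f) f'); rewrite /ract /= Defs.compA compfV comp1f.
Qed.

Lemma proj_eq_ract_family (I : Type) (u x : I -> Pt obj star) :
  (forall i, proj (u i) = proj (x i)) ->
  exists h : I -> Gt star, x = (fun i => ract (u i) (h i)).
Proof.
move=> same_proj.
have [h xh] := functional_choice (fun i g => x i = ract (u i) g)
  (fun i => proj_eq_ract (same_proj i)).
by exists h; apply: functional_extensionality.
Qed.

Variables (nM : M -> M -> Prop) (nP : Pt obj star -> Pt obj star -> Prop).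

Lemma simplex_lift (k : nat) (a : 'I_k.+1 -> M) :
  (forall m : M, exists u : Pt obj star, proj u = m) ->
  (forall b : 'I_k.+1 -> M, isimplex nM b ->
     forall x0 : Pt obj star, proj x0 = b ord0 ->
     exists x : 'I_k.+1 -> Pt obj star,
       [/\ isimplex nP x, x ord0 = x0 & forall i, proj (x i) = b i]) ->
  isimplex nM a ->
  exists2 x, isimplex nP x & (fun i => proj (x i)) = a.
Proof.
move=> proj_surj lift a_simplex.
have [x0 x0a] := proj_surj (a ord0).
have [x [x_simplex _ xa]] := lift a a_simplex x0 x0a.
by exists x => //; apply: functional_extensionality.
Qed.

Hypothesis act_nb : forall (g : Gt star) u v, nP u v -> nP (ract u g) (ract v g).
Hypothesis G_comm : forall g h : Gt star, gcomp g h = gcomp h g.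

Lemma isimplex_ract (k : nat) (u : 'I_k.+1 -> Pt obj star) (g : Gt star) :
  isimplex nP u -> isimplex nP (fun i => ract (u i) g).
Proof. by move=> u_simplex i j; apply: act_nb. Qed.

Variables (k : nat) (theta : ('I_k.+1 -> Pt obj star) -> Gt star).
Hypotheses (theta_hor : horizontal nP theta) (theta_eq : equivariant nP theta).

Lemma equivariant_ract_invariant {u : 'I_k.+1 -> Pt obj star} (g : Gt star) :
  isimplex nP u -> theta (fun i => ract (u i) g) = theta u.
Proof.
by move=> u_simplex; rewrite theta_eq // (G_comm (theta u)) Defs.compA compVf comp1f.
Qed.

Lemma horizontal_equivariant_fibrewise (u x : 'I_k.+1 -> Pt obj star) :
  isimplex nP u -> isimplex nP x ->
  (fun i => proj (u i)) = (fun i => proj (x i)) -> theta u = theta x.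
Proof.
move=> u_simplex x_simplex /equal_f/proj_eq_ract_family [h def_x].
pose u0 i := ract (u i) (h ord0).
have def_x0 : x = (fun i => ract (u0 i) (gcomp (ginv (h ord0)) (h i))).
  by rewrite def_x; apply: functional_extensionality => i;
     rewrite ract_comp Defs.compA compfV comp1f.
rewrite -(equivariant_ract_invariant (h ord0) u_simplex) def_x0.
apply: theta_hor; first exact: isimplex_ract.
- exact: compVf.
- by rewrite -def_x0.
Qed.

End Fibres.

Theorem proposition2
  (Phi : groupoid) (M : Type) (obj : M -> Ob Phi) (star : Ob Phi)
  (obj_inj : injective obj)
  (star_notin : forall m : M, obj m <> star)
  (nM : M -> M -> Prop) (nP : Pt obj star -> Pt obj star -> Prop)
  (nM_rs : refl_sym nM) (nP_rs : refl_sym nP)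
  (proj_surj : forall m : M, exists u : Pt obj star, proj u = m)
  (proj_nb : forall u v, nP u v -> nM (proj u) (proj v))
  (lift : forall (k : nat) (a : 'I_k.+1 -> M), isimplex nM a ->
     forall x0 : Pt obj star, proj x0 = a ord0 ->
     exists x : 'I_k.+1 -> Pt obj star,
       [/\ isimplex nP x, x ord0 = x0 & forall i, proj (x i) = a i])
  (act_nb : forall (g : Gt star) u v, nP u v -> nP (ract u g) (ract v g))
  (G_comm : forall g h : Gt star, gcomp g h = gcomp h g)
  (k : nat) (theta : ('I_k.+1 -> Pt obj star) -> Gt star)
  (theta_hor : horizontal nP theta) (theta_eq : equivariant nP theta) :
  exists Theta : ('I_k.+1 -> M) -> Gt star,
    (forall u, isimplex nP u -> theta u = pullback Theta u) /\
    (forall Theta' : ('I_k.+1 -> M) -> Gt star,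
       (forall u, isimplex nP u -> theta u = pullback Theta' u) ->
       forall a, isimplex nM a -> Theta' a = Theta a).
Proof.
have [Theta theta_pullback] := exists_factor_on (idg star)
  (horizontal_equivariant_fibrewise act_nb G_comm theta_hor theta_eq).
exists Theta; split=> // Theta' theta_pullback' a a_simplex.
have [x x_simplex <-] := simplex_lift proj_surj (lift k) a_simplex.
by rewrite -[LHS]theta_pullback' ?theta_pullback.
Qed.
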